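(* For real $a,c,d$ and integer $k$, let \[ \begin{aligned} \lambda(k,a,c,d)={}&k^3\left(6a^4-6a^3+a^2+2ac+2d\right)\\ &+k^2\left(-384a^5+324a^4-42a^3-144a^2c-6ac-192ad-12d\right)\\ &+k\left(4608a^6-3072a^5+618a^4+2304a^3c-36a^3+144a^2c+4608a^2d-a^2+4ac+576ad+22d\right)\\ &+4608a^6-2688a^5-6144a^4c+300a^4-24576a^3d-4608a^2d-384ad-12d. \end{aligned} \] Let $a>\frac{22}{10}$, and let $c,d$ satisfy \[ \tfrac{1}{512}\left(-1536a^3+1728a^2-424a+25\right)\le c\le \tfrac{1}{128}\left(192a^2-104a+11\right), \] \[ \tfrac{1}{4096}\left(-384a^2+224a+512c-25\right)\le d\le \tfrac{1}{2048}\left(768a^3-512a^2-512ac+104a+192c-7\right). \] Then there exists an integer $k\ge 4$ such that $\lambda(k,a,c,d)<0$. *)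

From Stdlib Require Import Reals ZArith.
Open Scope R_scope.

Definition lambda (k : Z) (a c d : R) : R :=
  let K := IZR k in
  K ^ 3 * (6 * a ^ 4 - 6 * a ^ 3 + a ^ 2 + 2 * a * c + 2 * d)
  + K ^ 2 * (- 384 * a ^ 5 + 324 * a ^ 4 - 42 * a ^ 3 - 144 * a ^ 2 * c
             - 6 * a * c - 192 * a * d - 12 * d)
  + K * (4608 * a ^ 6 - 3072 * a ^ 5 + 618 * a ^ 4 + 2304 * a ^ 3 * c
         - 36 * a ^ 3 + 144 * a ^ 2 * c + 4608 * a ^ 2 * d - a ^ 2
         + 4 * a * c + 576 * a * d + 22 * d)
  + (4608 * a ^ 6 - 2688 * a ^ 5 - 6144 * a ^ 4 * c + 300 * a ^ 4
     - 24576 * a ^ 3 * d - 4608 * a ^ 2 * d - 384 * a * d - 12 * d).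

From Stdlib Require Import Reals ZArith Lra Lia Psatz List.
Import ListNotations.
Open Scope R_scope.

(* Proof idea.  For fixed k, lambda(k,a,c,d) is affine in (c,d).  Writing
   c = c0 + u and d = d0(c) + v, where c0(a) and d0(a,c) are the lower bounds
   of the hypotheses, we get

     lambda = lambda(corner) + L_d * v + L_c * u,      u, v >= 0,

   with L_d the coefficient of d and L_c the slope of lambda along the lower
   edge d = d0(c) (which moves d by c/8).  We take k = up(32a), so that
   K = k lies in the window 32a < K <= 32a + 1.  Substituting a = 22/10 + s
   and K = 32a + t with s >= 0 and 0 < t <= 1, each of lambda(corner), L_d
   and L_c becomes a polynomial in s whose coefficients are nonpositive
   polynomials in t with a negative constant coefficient; a Horner-form sign
   lemma then shows all three are negative. *)

Definition lambdaR (K a c d : R) : R :=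
  K ^ 3 * (6 * a ^ 4 - 6 * a ^ 3 + a ^ 2 + 2 * a * c + 2 * d)
  + K ^ 2 * (- 384 * a ^ 5 + 324 * a ^ 4 - 42 * a ^ 3 - 144 * a ^ 2 * c
             - 6 * a * c - 192 * a * d - 12 * d)
  + K * (4608 * a ^ 6 - 3072 * a ^ 5 + 618 * a ^ 4 + 2304 * a ^ 3 * c
         - 36 * a ^ 3 + 144 * a ^ 2 * c + 4608 * a ^ 2 * d - a ^ 2
         + 4 * a * c + 576 * a * d + 22 * d)
  + (4608 * a ^ 6 - 2688 * a ^ 5 - 6144 * a ^ 4 * c + 300 * a ^ 4
     - 24576 * a ^ 3 * d - 4608 * a ^ 2 * d - 384 * a * d - 12 * d).

Definition c_low (a : R) : R :=
  (1 / 512) * (- 1536 * a ^ 3 + 1728 * a ^ 2 - 424 * a + 25).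
Definition d_low (a c : R) : R :=
  (1 / 4096) * (- 384 * a ^ 2 + 224 * a + 512 * c - 25).

Definition slope_d (a K : R) : R :=
  2 * K ^ 3 + K ^ 2 * (- 192 * a - 12) + K * (4608 * a ^ 2 + 576 * a + 22)
  - 24576 * a ^ 3 - 4608 * a ^ 2 - 384 * a - 12.

Definition slope_c (a K : R) : R :=
  2 * a * K ^ 3 + K ^ 2 * (- 144 * a ^ 2 - 6 * a)
  + K * (2304 * a ^ 3 + 144 * a ^ 2 + 4 * a) - 6144 * a ^ 4 + slope_d a K / 8.

Definition corner (a K : R) : R := lambdaR K a (c_low a) (d_low a (c_low a)).

Lemma lambdaR_affine (K a c d : R) :
  lambdaR K a c d
  = corner a K + slope_d a K * (d - d_low a c) + slope_c a K * (c - c_low a).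
Proof. unfold corner, lambdaR, slope_c, slope_d, c_low, d_low; field. Qed.

Lemma lambdaR_neg_above_corner (K a c d : R) :
  corner a K < 0 -> slope_d a K < 0 -> slope_c a K < 0 ->
  c_low a <= c -> d_low a c <= d -> lambdaR K a c d < 0.
Proof.
  intros Hcorner Hd Hc Hcl Hdl.
  rewrite lambdaR_affine.
  assert (Pd : slope_d a K * (d - d_low a c) <= 0) by nra.
  assert (Pc : slope_c a K * (c - c_low a) <= 0) by nra.
  lra.
Qed.

Fixpoint horner (l : list R) (s : R) : R :=
  match l with
  | [] => 0
  | c :: l' => c + s * horner l' s
  end.

Lemma horner_nonpos (l : list R) (s : R) :
  0 <= s -> Forall (fun c => c <= 0) l -> horner l s <= 0.
Proof.
  intros Hs Hl; induction Hl as [|c l Hc _ IH]; simpl; [lra|].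
  assert (s * horner l s <= 0) by nra.
  lra.
Qed.

Lemma horner_neg (c : R) (l : list R) (s : R) :
  0 <= s -> c < 0 -> Forall (fun c => c <= 0) l -> horner (c :: l) s < 0.
Proof.
  intros Hs Hc Hl; simpl.
  assert (horner l s <= 0) by now apply horner_nonpos.
  assert (s * horner l s <= 0) by nra.
  lra.
Qed.

Lemma neg_on_window (f : R -> R -> R) (a K : R) :
  (forall s t, 0 <= s -> 0 < t -> t <= 1 -> f (22/10 + s) (32 * (22/10 + s) + t) < 0) ->
  22/10 < a -> 32 * a < K -> K <= 32 * a + 1 -> f a K < 0.
Proof.
  intros Hf Ha HK1 HK2.
  specialize (Hf (a - 22/10) (K - 32 * a)).
  replace (22/10 + (a - 22/10)) with a in Hf by ring.
  replace (32 * a + (K - 32 * a)) with K in Hf by ring.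
  apply Hf; lra.
Qed.

Lemma unit_powers (t : R) : 0 < t -> t <= 1 -> 0 <= t ^ 2 <= 1 /\ 0 <= t ^ 3 <= 1.
Proof. intros; split; split; nra. Qed.

Lemma slope_d_neg (a K : R) :
  22/10 < a -> 32 * a < K -> K <= 32 * a + 1 -> slope_d a K < 0.
Proof.
  apply neg_on_window; intros s t Hs Ht0 Ht1.
  destruct (unit_powers t Ht0 Ht1) as [T2 T3].
  replace (slope_d _ _) with
    (horner [ -9887772/125 - 195866/25 * t - 12 * t ^ 2 + 2 * t ^ 3;
              -2796736/25 - 34752/5 * t;
              -262656/5 - 1536 * t;
              -8192 ] s)
    by (unfold slope_d; simpl; field).
  apply horner_neg; [lra | lra | repeat constructor; lra].
Qed.

Lemma slope_c_neg (a K : R) :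
  22/10 < a -> 32 * a < K -> K <= 32 * a + 1 -> slope_c a K < 0.
Proof.
  apply neg_on_window; intros s t Hs Ht0 Ht1.
  destruct (unit_powers t Ht0 Ht1) as [T2 T3].
  replace (slope_c _ _) with
    (horner [ -451816227/1250 - 5154897/500 * t + 10881/50 * t ^ 2 + 93/20 * t ^ 3;
              -80790264/125 - 326804/25 * t + 1026/5 * t ^ 2 + 2 * t ^ 3;
              -10822336/25 - 27504/5 * t + 48 * t ^ 2;
              -643584/5 - 768 * t;
              -14336 ] s)
    by (unfold slope_c, slope_d; simpl; field).
  apply horner_neg; [lra | lra | repeat constructor; lra].
Qed.

Lemma corner_neg (a K : R) :
  22/10 < a -> 32 * a < K -> K <= 32 * a + 1 -> corner a K < 0.
Proof.
  apply neg_on_window; intros s t Hs Ht0 Ht1.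
  destruct (unit_powers t Ht0 Ht1) as [T2 _].
  replace (corner _ _) with
    (horner [ -9159040377927/10000000 - 35126555607/4000000 * t
                + 630486153/800000 * t ^ 2;
              -6886771163469/2000000 + 11322555723/800000 * t
                + 16312851/6400 * t ^ 2;
              -265034748609/50000 + 124361229/2000 * t + 602727/200 * t ^ 2;
              -1096812561/250 + 3358869/50 * t + 16881/10 * t ^ 2;
              -53107128/25 + 167184/5 * t + 456 * t ^ 2;
              -15111264/25 + 40368/5 * t + 48 * t ^ 2;
              -469248/5 + 768 * t;
              -6144 ] s)
    by (unfold corner, lambdaR, c_low, d_low; simpl; field).
  apply horner_neg; [lra | lra | repeat constructor; lra].
Qed.

Theorem mainTheorem12 (a c d : R)
  (ha : 22 / 10 < a)
  (hc1 : (1 / 512) * (- 1536 * a ^ 3 + 1728 * a ^ 2 - 424 * a + 25) <= c)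
  (hc2 : c <= (1 / 128) * (192 * a ^ 2 - 104 * a + 11))
  (hd1 : (1 / 4096) * (- 384 * a ^ 2 + 224 * a + 512 * c - 25) <= d)
  (hd2 : d <= (1 / 2048) * (768 * a ^ 3 - 512 * a ^ 2 - 512 * a * c + 104 * a
                            + 192 * c - 7)) :
  exists k : Z, (4 <= k)%Z /\ lambda k a c d < 0.
Proof.
  destruct (archimed (32 * a)) as [Hup1 Hup2].
  exists (up (32 * a)); split.
  - assert (4 < up (32 * a))%Z by (apply lt_IZR; lra).
    lia.
  - change (lambda (up (32 * a)) a c d) with (lambdaR (IZR (up (32 * a))) a c d).
    apply lambdaR_neg_above_corner.
    + apply corner_neg; lra.
    + apply slope_d_neg; lra.
    + apply slope_c_neg; lra.
    + exact hc1.
    + exact hd1.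
Qed.
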